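(* Let $\varphi:\mathrm{WCQSym}\to\mathrm{QSym}$ be the $\mathbf k$-linear map with $\varphi(M_\alpha)=(-1)^{\ell_\varepsilon(\alpha)}M_{\bar\alpha}$ for $\alpha\in\mathcal C_N$ and $\varphi(M_\alpha)=0$ for $\alpha\in\mathcal C_\varepsilon$. Let $B_\varepsilon=\{M_\alpha:\alpha\in\mathcal C_\varepsilon\}$ and $B_N=\{M_\alpha+(-1)^{\ell_\varepsilon(\alpha)+1}M_{\bar\alpha}:\alpha\in\mathcal C_N\setminus\mathcal C(\mathbb N)\}$. Then the disjoint union $B_\varepsilon\uplus B_N$ is a basis of the free $\mathbf k$-module $\ker\varphi$.
   Context: $\mathbf{k}$ is a commutative ring containing $\mathbb{Q}$. $\tilde{\mathbb N}=\mathbb N\cup\{\varepsilon\}$ with $0+\varepsilon=\varepsilon+\varepsilon=\varepsilon$ and $n+\varepsilon=n$ for integers $n\ge1$. $\mathbf{k}[[X]]_{\tilde{\mathbb N}}$, $X=\{x_1<x_2<\cdots\}$, is the algebra of possibly infinite linear combinations of formal monomials $\prod x_i^{f(x_i)}$, $f$ finitely supported $\tilde{\mathbb N}$-valued, multiplied by adding exponents in $\tilde{\mathbb N}$. An $\tilde{\mathbb N}$-composition is a finite (possibly empty) sequence $\alpha=(\alpha_1,\dots,\alpha_k)$ of elements of $\{\varepsilon,1,2,\dots\}$; $M_\alpha=\sum_{1\le i_1<\cdots<i_k}x_{i_1}^{\alpha_1}\cdots x_{i_k}^{\alpha_k}$, $M_\emptyset=1$. $\mathrm{WCQSym}$ is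 the $\mathbf k$-span of the (linearly independent) $M_\alpha$. $\mathcal C(\mathbb N)$ is the set of $\tilde{\mathbb N}$-compositions all of whose entries are positive integers, and $\mathrm{QSym}$ is the span of $M_\alpha$, $\alpha\in\mathcal C(\mathbb N)$. $\ell_\varepsilon(\alpha)$ is the number of entries of $\alpha$ equal to $\varepsilon$; $\bar\alpha$ is $\alpha$ with its $\varepsilon$ entries deleted. $\mathcal C_\varepsilon$ is the set of $\tilde{\mathbb N}$-compositions with first entry $\varepsilon$; $\mathcal C_N$ is the set of all others (including the empty one). *)

From HB Require Import structures.
From mathcomp Require Import all_boot all_order all_algebra.
From mathcomp Require Import finmap.
From mathcomp.multinomials Require Import monalg.
Set Implicit Arguments. Unset Strict Implicit. Unset Printing Implicit Defensive.
Import GRing.Theory.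
Local Open Scope ring_scope.

(* Ñ-compositions: an entry 0 encodes ε, an entry n >= 1 encodes the
   positive integer n.  This is a bijection {ε,1,2,...} <-> nat. *)
Definition wcomp := seq nat.

Definition eps_len (a : wcomp) : nat := count (pred1 0%N) a.
Definition bar (a : wcomp) : wcomp := filter (fun x => x != 0%N) a.
Definition in_Ceps (a : wcomp) : bool :=
  if a is 0%N :: _ then true else false.
Definition in_CN (a : wcomp) : bool := ~~ in_Ceps a.
Definition in_CNat (a : wcomp) : bool := all (fun x => 0 < x)%N a.

(* WCQSym: the free k-module with basis (M_α)_α (the M_α being linearly
   independent, WCQSym is identified with the free module on Ñ-compositions);
   QSym is the submodule spanned by the M_α, α ∈ C(N). *)
Definition WCQSym (k : nzRingType) := {malg k[wcomp]}.
Definition M (k : nzRingType) (a : wcomp) : WCQSym k := << a >>.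

Definition phiM (k : nzRingType) (a : wcomp) : WCQSym k :=
  if in_CN a then (-1) ^+ eps_len a *: M k (bar a) else 0.
(* the k-linear extension φ : WCQSym -> QSym (viewed inside WCQSym) *)
Definition phi (k : nzRingType) (v : WCQSym k) : WCQSym k :=
  \sum_(a <- msupp v) v@_a *: phiM k a.

Definition ker_phi (k : nzRingType) : pred (WCQSym k) := fun v => phi v == 0.

Definition basis_index (a : wcomp) : bool :=
  in_Ceps a || (in_CN a && ~~ in_CNat a).
Definition basis_vec (k : nzRingType) (a : wcomp) : WCQSym k :=
  if in_Ceps a then M k a
  else M k a + (-1) ^+ (eps_len a).+1 *: M k (bar a).

Definition is_basis_of (k : nzRingType) (V : lmodType k) (U : pred V)
    (I : eqType) (J : pred I) (b : I -> V) : Prop :=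
  [/\ forall i, J i -> U (b i),
      forall (s : seq I) (c : I -> k), uniq s -> all J s ->
        \sum_(i <- s) c i *: b i = 0 -> forall i, i \in s -> c i = 0
    & forall v, U v -> exists (s : seq I) (c : I -> k),
        all J s /\ v = \sum_(i <- s) c i *: b i].

(* phi fixes every M_a with a in C(N), so phi is idempotent and ker phi is the
   image of id - phi.  The vector M_a - phi(M_a) is 0 for a in C(N), M_a for
   a in C_eps, and the element of B_N indexed by a otherwise, so the family
   spans the kernel.  It is independent because its member indexed by a has
   coefficient 1 at a and its only other coefficient sits at bar a, which lies
   in C(N) and so indexes no member of the family. *)
From mathcomp Require Import all_boot all_algebra.
From mathcomp Require Import finmap.
From mathcomp.multinomials Require Import monalg.
Local Open Scope ring_scope.
Import GRing.Theory.

Lemma in_CNat_bar (a : wcomp) : in_CNat (bar a).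
Proof. by rewrite /in_CNat /bar all_filter; apply/allP => x _ /=; rewrite lt0n implybb. Qed.

Lemma bar_CNat (a : wcomp) : in_CNat a -> bar a = a.
Proof. by move=> aN; apply/all_filterP; apply: sub_all aN => x; rewrite lt0n. Qed.

Lemma eps_len_CNat (a : wcomp) : in_CNat a -> eps_len a = 0%N.
Proof.
move=> /allP aN; rewrite /eps_len -[RHS](count_pred0 a).
by apply: eq_in_count => x /aN /=; rewrite lt0n => /negbTE.
Qed.

Lemma in_CN_CNat (a : wcomp) : in_CNat a -> in_CN a.
Proof. by case: a => [|[|x] a]. Qed.

Lemma basis_index_CNat (a : wcomp) : basis_index a -> in_CNat a = false.
Proof. by rewrite /basis_index /in_CN; case: a => [|[|x] a] //= /negbTE. Qed.

Section Kernel.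
Variable k : nzRingType.

Lemma malg_expand (v : WCQSym k) : v = \sum_(a <- msupp v) v@_a *: M k a.
Proof.
rewrite {1}(monalgE v); apply: eq_bigr => a _.
by apply/malgP => b; rewrite mcoeffZ !mcoeffU mulr_natr.
Qed.

Lemma phi_fsubset (v : WCQSym k) (d : {fset wcomp}) : (msupp v `<=` d)%fset ->
  phi v = \sum_(a <- d) v@_a *: phiM k a.
Proof.
move=> sub; rewrite /phi (big_fset_incl _ sub) // => a _ /mcoeff_outdom ->.
by rewrite scale0r.
Qed.

Lemma phiD (u w : WCQSym k) : phi (u + w) = phi u + phi w.
Proof.
set d := (msupp u `|` msupp w)%fset.
rewrite (@phi_fsubset _ d) ?msuppD_le // (@phi_fsubset u d) ?fsubsetUl //.
rewrite (@phi_fsubset w d) ?fsubsetUr // -big_split /=.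
by apply: eq_bigr => a _; rewrite mcoeffD scalerDl.
Qed.

Lemma phiZ (c : k) (v : WCQSym k) : phi (c *: v) = c *: phi v.
Proof.
rewrite (@phi_fsubset _ (msupp v)) ?msuppZ_le // /phi scaler_sumr.
by apply: eq_bigr => a _; rewrite mcoeffZ scalerA.
Qed.

Lemma phi_M (a : wcomp) : phi (M k a) = phiM k a.
Proof. by rewrite /phi /M msuppU oner_eq0 big_seq_fset1 mcoeffU eqxx scale1r. Qed.

Lemma phiM_CNat {a : wcomp} : in_CNat a -> phiM k a = M k a.
Proof.
move=> aN; rewrite /phiM in_CN_CNat // eps_len_CNat // bar_CNat //.
by rewrite expr0 scale1r.
Qed.

Lemma basis_vec_ker (a : wcomp) : ker_phi (basis_vec k a).
Proof.
rewrite /ker_phi /basis_vec; case: ifP => aeps.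
  by rewrite phi_M /phiM /in_CN aeps.
rewrite phiD phiZ !phi_M (phiM_CNat (in_CNat_bar a)) /phiM /in_CN aeps /=.
by rewrite exprS mulN1r scaleNr subrr.
Qed.

Lemma M_decomp (a : wcomp) :
  M k a = (if basis_index a then basis_vec k a else 0) + phiM k a.
Proof.
rewrite /basis_index /basis_vec /in_CN.
case: (boolP (in_Ceps a)) => aeps /=.
  by rewrite /phiM /in_CN aeps addr0.
case: (boolP (in_CNat a)) => aN /=; first by rewrite add0r phiM_CNat.
by rewrite /phiM /in_CN aeps -addrA exprS mulN1r scaleNr addNr addr0.
Qed.

Lemma mcoeff_basis_vec (a i : wcomp) : basis_index a ->
  (basis_vec k i)@_a = (i == a)%:R.
Proof.
move=> /basis_index_CNat aN.
have bar_neq : (bar i == a) = false.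
  by apply: contraFF aN => /eqP <-; exact: in_CNat_bar.
rewrite /basis_vec /M; case: ifP => _; first by rewrite mcoeffU.
by rewrite mcoeffD mcoeffZ !mcoeffU bar_neq mulr0 addr0.
Qed.

Lemma basis_vec_free (s : seq wcomp) (c : wcomp -> k) :
  uniq s -> all basis_index s -> \sum_(i <- s) c i *: basis_vec k i = 0 ->
  forall a, a \in s -> c a = 0.
Proof.
move=> us /allP sJ sum0 a sa.
have := congr1 (mcoeff a) sum0; rewrite mcoeff0 raddf_sum /=.
rewrite (bigD1_seq a) //= big1_seq ?addr0 => [|i /andP [ia _]].
  by rewrite mcoeffZ mcoeff_basis_vec ?sJ // eqxx mulr1.
by rewrite mcoeffZ mcoeff_basis_vec ?sJ // (negbTE ia) mulr0.
Qed.

Lemma ker_phi_expand (v : WCQSym k) : ker_phi v ->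
  v = \sum_(a <- [seq a <- msupp v | basis_index a]) v@_a *: basis_vec k a.
Proof.
move=> /eqP phi0; rewrite big_filter big_mkcond /= {1}(malg_expand v).
transitivity (\sum_(a <- msupp v)
    v@_a *: (if basis_index a then basis_vec k a else 0) + phi v).
  by rewrite /phi -big_split /=; apply: eq_bigr => a _; rewrite -scalerDr -M_decomp.
by rewrite phi0 addr0; apply: eq_bigr => a _; case: ifP; rewrite ?scaler0.
Qed.

End Kernel.

Theorem theorem3p9 (k : comUnitRingType)
    (hQ : forall n : nat, (n.+1)%:R \is a @GRing.unit k) :
  is_basis_of (@ker_phi k) basis_index (@basis_vec k).
Proof.
split=> [a _ | s c | v vker]; first exact: basis_vec_ker.
  exact: basis_vec_free.
exists [seq a <- msupp v | basis_index a], (fun a => v@_a); split.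
  exact: filter_all.
exact: ker_phi_expand.
Qed.
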